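(* For every integer $n \geq 1$ there is an MSyDS $\mathcal{S}_n$ with two layers and $n$ nodes, in which every local function is a threshold function and every master function is a symmetric Boolean function, such that: the phase space of $\mathcal{S}_n$ contains exactly one cycle, this cycle has length $n+1$, and every transient has length one (i.e., every configuration not on this cycle has its successor on the cycle).
   Context: A multilayer synchronous dynamical system (MSyDS) $\mathcal{S}$ over $\mathbb{B}=\{0,1\}$ with $k\ge 1$ layers consists of: a finite node set $V$ with $n$ nodes; undirected simple graphs $G_i=(V,E_i)$, $1\le i\le k$ (all layers share the node set $V$, edge sets may differ); for each layer $i$ and node $v$ a local function $f_{i,v}$ with output in $\mathbb{B}$ whose inputs are the states of the nodes in the closed neighborhood of $v$ in $G_i$ (namely $v$ and its neighbors in $G_i$); and for each node $v$ a master function $\psi_v:\mathbb{B}^k\to\mathbb{B}$. A configuration is a map $\mathcal{C}:V\to\mathbb{B}$. The successor of $\mathcal{C}$ is the configuration $\mathcal{C}'$ with $\mathcal{C}'(v)=\psi_v(f_{1,v}(\mathcal{C}),\dots,f_{k,v}(\mathcal{C}))$ for every $v$ (synchronous update), where $f_{i,v}(\mathcal{C})$ denotes $f_{i,v}$ evaluated on the states in $\mathcal{C}$ of the closed neighborhood of $v$ in $G_i$. The phase space of $\mathcal{S}$ is the directed graph whose vertices are the $2^n$ configurations, with an arc from each configuration to its successor. A transient is a directed path in the phase space leading to a cycle. For an integer $\tau\ge 0$, the $\tau$-threshold function is the Boolean function that equals 1 iff at least $\tau$ of its inputs equal 1; a threshold function is a $\tau$-threshold function for some $\tau\ge0$.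 A Boolean function is symmetric if its value depends only on the number of 1's among its inputs. *)

From mathcomp Require Import all_boot.
Set Implicit Arguments. Unset Strict Implicit. Unset Printing Implicit Defensive.

Definition config (n : nat) := {ffun 'I_n -> bool}.

Record MSyDS (n k : nat) := {
  layer  : 'I_k -> rel 'I_n;
  localf : 'I_k -> 'I_n -> config n -> bool;
  master : 'I_n -> {ffun 'I_k -> bool} -> bool
}.

Definition cnbhd n k (S : MSyDS n k) (i : 'I_k) (v : 'I_n) : {set 'I_n} :=
  [set u | (u == v) || layer S i v u].

Definition wf_MSyDS n k (S : MSyDS n k) : Prop :=
  (forall i, symmetric (layer S i) /\ irreflexive (layer S i)) /\
  (forall i v (C C' : config n),
      (forall u, u \in cnbhd S i v -> C u = C' u) ->
      localf S i v C = localf S i v C').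

Definition is_threshold_local n k (S : MSyDS n k) (i : 'I_k) (v : 'I_n) : Prop :=
  exists tau : nat, forall C : config n,
    localf S i v C = (tau <= #|[set u in cnbhd S i v | C u]|).

Definition symmetric_bool k (psi : {ffun 'I_k -> bool} -> bool) : Prop :=
  forall x y : {ffun 'I_k -> bool},
    #|[set j | x j]| = #|[set j | y j]| -> psi x = psi y.

Definition successor n k (S : MSyDS n k) (C : config n) : config n :=
  [ffun v => master S v [ffun i => localf S i v C]].

Definition on_cycle n k (S : MSyDS n k) (C : config n) : Prop :=
  exists m, 0 < m /\ iter m (successor S) C = C.

(** Both layers are the complete graph, so every local function sees the whole
    configuration and only the number [c] of ones matters. In layer 0 node [v]
    fires when [c >= v], in layer 1 when [c >= n], and the master function is
    the parity of its two inputs. Hence the successor of any configuration is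
    the "prefix" configuration with [c + 1] ones (nodes [0..c] set), except that
    the all-ones configuration goes to all zeros. The prefix configurations with
    [0, 1, ..., n] ones thus form a cycle of length [n + 1] which every
    configuration reaches in one step. *)
From mathcomp Require Import all_boot.

Lemma card_ord_lt (n k : nat) : #|[set i : 'I_n | i < k]| = minn k n.
Proof.
have le_kn_n : minn k n <= n := geq_minr k n.
have -> : [set i : 'I_n | i < k] = widen_ord le_kn_n @: [set: 'I_(minn k n)].
  apply/setP => i; rewrite inE; apply/idP/imsetP => [lt_ik | [j _ ->]].
    have lt_i_min : i < minn k n by rewrite ltn_min lt_ik ltn_ord.
    by exists (Ordinal lt_i_min) => //; apply: val_inj.
  by move: (ltn_ord j); rewrite /= ltn_min => /andP[].
rewrite card_imset ?cardsT ?card_ord //.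
by move=> j j' /(congr1 val) /= /val_inj.
Qed.

Lemma card_set_ffun2 (x : {ffun 'I_2 -> bool}) :
  #|[set j | x j]| = x ord0 + x ord_max.
Proof.
rewrite -sum1_card big_mkcond /= big_ord_recl big_ord_recl big_ord0 !inE.
have -> : lift ord0 ord0 = ord_max :> 'I_2 by apply: val_inj.
by case: (x ord0); case: (x ord_max).
Qed.

Section CounterSystem.

Variable n : nat.

Definition count_ones (C : config n) : nat := #|[set v | C v]|.

Definition prefix_config (j : nat) : config n := [ffun v : 'I_n => v < j].

Definition counter_threshold (i : 'I_2) (v : 'I_n) : nat :=
  if i == ord0 then val v else n.

Definition counter_sys : MSyDS n 2 :=
  {| layer := fun _ u w => u != w;
     localf := fun i v C => counter_threshold i v <= count_ones C;
     master := fun _ x => odd #|[set j | x j]| |}.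

Lemma count_ones_le (C : config n) : count_ones C <= n.
Proof. by rewrite -[n in _ <= n]card_ord max_card. Qed.

Lemma count_ones_prefix (j : nat) : count_ones (prefix_config j) = minn j n.
Proof.
rewrite -card_ord_lt; apply: eq_card => v.
by rewrite !inE ffunE.
Qed.

Lemma cnbhd_counter_sys (i : 'I_2) (v : 'I_n) : cnbhd counter_sys i v = setT.
Proof. by apply/setP => u; rewrite !inE /= eq_sym orbN. Qed.

Lemma successor_counter_sys (C : config n) :
  successor counter_sys C = prefix_config ((count_ones C).+1 %% n.+1).
Proof.
apply/ffunP => v; rewrite !ffunE /= card_set_ffun2 !ffunE /counter_threshold /=.
have [lt_c_n | le_n_c] := ltnP (count_ones C) n.
  by rewrite modn_small // addn0 oddb.
have -> : count_ones C = n by apply/eqP; rewrite eqn_leq count_ones_le.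
by rewrite modnn (ltnW (ltn_ord v)) ltn0.
Qed.

Lemma iter_counter_sys (j : nat) :
  iter j (successor counter_sys) (prefix_config 0) = prefix_config (j %% n.+1).
Proof.
elim: j => [|j IHj]; first by rewrite mod0n.
rewrite iterS IHj successor_counter_sys count_ones_prefix.
have le_mod_n : j %% n.+1 <= n by rewrite -ltnS ltn_pmod.
by rewrite (minn_idPl le_mod_n) -addn1 modnDml addn1.
Qed.

Lemma prefix_config_inj (j k : nat) :
  j <= n -> k <= n -> prefix_config j = prefix_config k -> j = k.
Proof.
move=> le_j_n le_k_n /(congr1 count_ones).
by rewrite !count_ones_prefix (minn_idPl le_j_n) (minn_idPl le_k_n).
Qed.

Lemma successor_counter_sys_on_orbit (C : config n) :
  exists j,
    successor counter_sys C = iter j (successor counter_sys) (prefix_config 0).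
Proof.
by exists (count_ones C).+1; rewrite successor_counter_sys iter_counter_sys.
Qed.

Lemma wf_counter_sys : wf_MSyDS counter_sys.
Proof.
split=> [i | i v C C' eq_C_C'].
  by split=> [u w | u] /=; rewrite ?eqxx // eq_sym.
have -> // : C = C'.
by apply/ffunP => u; apply: eq_C_C'; rewrite cnbhd_counter_sys inE.
Qed.

Lemma threshold_counter_sys (i : 'I_2) (v : 'I_n) :
  is_threshold_local counter_sys i v.
Proof.
exists (counter_threshold i v) => C /=.
rewrite cnbhd_counter_sys; congr (_ <= _).
by apply: eq_card => u; rewrite !inE.
Qed.

Lemma symmetric_master_counter_sys (v : 'I_n) :
  symmetric_bool (master counter_sys v).
Proof. by move=> x y /= ->. Qed.

End CounterSystem.

Theorem theorem3p1 : forall n : nat, 0 < n ->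
  exists S : MSyDS n 2,
    wf_MSyDS S /\
    (forall i v, is_threshold_local S i v) /\
    (forall v, symmetric_bool (master S v)) /\
    exists C0 : config n,
      (* C0 lies on a cycle of length exactly n+1 *)
      iter n.+1 (successor S) C0 = C0 /\
      (forall m, 0 < m < n.+1 -> iter m (successor S) C0 <> C0) /\
      (* this is the only cycle *)
      (forall C, on_cycle S C -> exists j, C = iter j (successor S) C0) /\
      (* every transient has length one: each successor lies on the cycle *)
      (forall C, exists j, successor S C = iter j (successor S) C0).
Proof.
(* The construction needs no positivity: for n = 0 it is a single fixed point. *)
move=> n _; exists (counter_sys n).
split; first exact: wf_counter_sys.
split; first exact: threshold_counter_sys.
split; first exact: symmetric_master_counter_sys.
exists (prefix_config n 0).
split; first by rewrite iter_counter_sys modnn.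
split.
  move=> m /andP[m_gt0 lt_m_n1]; rewrite iter_counter_sys modn_small //.
  move/(@prefix_config_inj n m 0 (ltnSE lt_m_n1) (leq0n n)) => m_eq0.
  by rewrite m_eq0 in m_gt0.
split; last exact: successor_counter_sys_on_orbit.
move=> C [m [m_gt0 <-]]; rewrite -(prednK m_gt0) iterS.
exact: successor_counter_sys_on_orbit.
Qed.
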